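(* Let $\varphi$ be a continuous Archimedean t-norm, $A^{+}=(a^{+}_{ij}),A^{-}=(a^{-}_{ij})\in[0,1]^{m\times n}$, $b\in[0,1]^m$, and let $I_j$, $S'_{ij}$ be as in the context. Let $i\in\{1,\dots,m\}$, $j\in\{1,\dots,n\}$ with $S'_{ij}\neq\varnothing$. Then $I_j$ is a nonempty closed interval $[L_j,U_j]$ and $S'_{ij}$ is one of the sets $\{L_j\}$, $\{U_j\}$, $\{L_j,U_j\}$, $[L_j,U_j]$.
   Context: A t-norm is a binary operation on $[0,1]$ that is commutative, associative, nondecreasing in each argument and has $1$ as neutral element; a continuous t-norm $\varphi$ is Archimedean if $\varphi(x,x)<x$ for all $x\in(0,1)$. For $i\in\mathscr{I}=\{1,\dots,m\}$, $j\in\mathscr{J}=\{1,\dots,n\}$: $S_{ij}=\{t\in[0,1]:\max\{\varphi(a^{+}_{ij},t),\varphi(a^{-}_{ij},1-t)\}=b_i\}$, $I_{ij}=\{t\in[0,1]:\max\{\varphi(a^{+}_{ij},t),\varphi(a^{-}_{ij},1-t)\}\le b_i\}$, $I_j=\bigcap_{i\in\mathscr{I}}I_{ij}$, and $S'_{ij}=S_{ij}\cap I_j$. *)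

From Stdlib Require Import Reals.
Open Scope R_scope.

Definition unit_I (x : R) : Prop := 0 <= x <= 1.

(* A t-norm on [0,1], represented as a function R -> R -> R whose values
   matter only on [0,1] x [0,1]. *)
Definition is_tnorm (phi : R -> R -> R) : Prop :=
  (forall x y, unit_I x -> unit_I y -> unit_I (phi x y)) /\
  (forall x y, unit_I x -> unit_I y -> phi x y = phi y x) /\
  (forall x y z, unit_I x -> unit_I y -> unit_I z ->
     phi x (phi y z) = phi (phi x y) z) /\
  (forall x x' y y', unit_I x -> unit_I x' -> unit_I y -> unit_I y' ->
     x <= x' -> y <= y' -> phi x y <= phi x' y') /\
  (forall x, unit_I x -> phi x 1 = x).

Definition continuous_on_unit_square (phi : R -> R -> R) : Prop :=
  forall x y, unit_I x -> unit_I y ->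
  forall eps, 0 < eps -> exists delta, 0 < delta /\
    forall x' y', unit_I x' -> unit_I y' ->
      Rabs (x' - x) < delta -> Rabs (y' - y) < delta ->
      Rabs (phi x' y' - phi x y) < eps.

Definition continuous_archimedean_tnorm (phi : R -> R -> R) : Prop :=
  is_tnorm phi /\ continuous_on_unit_square phi /\
  (forall x, 0 < x < 1 -> phi x x < x).

(* Row indices i < m, column indices j < n (0-based). *)
Definition lhs (phi : R -> R -> R) (Ap Am : nat -> nat -> R) (i j : nat) (t : R) : R :=
  Rmax (phi (Ap i j) t) (phi (Am i j) (1 - t)).

Definition S_set phi Ap Am (b : nat -> R) i j : R -> Prop :=
  fun t => unit_I t /\ lhs phi Ap Am i j t = b i.

Definition I_set phi Ap Am (b : nat -> R) i j : R -> Prop :=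
  fun t => unit_I t /\ lhs phi Ap Am i j t <= b i.

Definition I_col phi Ap Am b (m : nat) j : R -> Prop :=
  fun t => unit_I t /\ forall i, (i < m)%nat -> I_set phi Ap Am b i j t.

Definition S'_set phi Ap Am b m i j : R -> Prop :=
  fun t => S_set phi Ap Am b i j t /\ I_col phi Ap Am b m j t.

(* Each constraint phi(a+, t) <= b_i cuts out a closed down-set of [0,1] and each
   constraint phi(a-, 1 - t) <= b_i a closed up-set, so I_j is a closed interval
   [L, U].  A continuous Archimedean t-norm is strictly increasing in its second
   argument wherever it is positive: if phi(a, t) = phi(a, t') = x > 0 with
   t < t', the intermediate value theorem writes t = phi(t', s) with s < 1, so
   phi(x, s) = x, and the least s with phi(x, s) = x would be an idempotent
   strictly between 0 and 1.  Hence, when b_i > 0, a point of S'_ij where the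
   maximum is attained by phi(a+, t) can only be U, and one where it is attained
   by phi(a-, 1 - t) can only be L; when b_i = 0, S'_ij is all of I_j. *)

From Stdlib Require Import Reals Lra Classical.
Open Scope R_scope.

Definition adherent (E : R -> Prop) (x : R) : Prop :=
  forall d, 0 < d -> exists u, E u /\ Rabs (u - x) < d.

Definition closed (E : R -> Prop) : Prop := forall x, adherent E x -> E x.

Definition continuous_within_unit (f : R -> R) (x : R) : Prop :=
  forall eps, 0 < eps -> exists d, 0 < d /\
    forall y, unit_I y -> Rabs (y - x) < d -> Rabs (f y - f x) < eps.

Lemma adherent_mono (E F : R -> Prop) x :
  (forall u, E u -> F u) -> adherent E x -> adherent F x.
Proof.
  intros HEF HE d Hd. destruct (HE d Hd) as [u [Hu Hux]]. exists u; auto.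
Qed.

Lemma adherent_opp (E : R -> Prop) x :
  adherent E x -> adherent (fun u => E (- u)) (- x).
Proof.
  intros HE d Hd. destruct (HE d Hd) as [u [Hu Hux]].
  exists (- u). rewrite Ropp_involutive. split; [exact Hu|].
  replace (- u - - x) with (- (u - x)) by ring. rewrite Rabs_Ropp. exact Hux.
Qed.

Lemma adherent_from_right (E : R -> Prop) s :
  s < 1 -> (forall u, s < u <= 1 -> E u) -> adherent E s.
Proof.
  intros Hs HE d Hd.
  assert (Hr : 0 < Rmin d (1 - s)) by (apply Rmin_glb_lt; lra).
  pose proof (Rmin_l d (1 - s)). pose proof (Rmin_r d (1 - s)).
  exists (s + Rmin d (1 - s) / 2). split.
  - apply HE. lra.
  - apply Rabs_def1; lra.
Qed.

Lemma closed_segment a b : closed (fun u => a <= u <= b).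
Proof.
  intros x Hx. split; apply Rnot_lt_le; intro Hlt.
  - destruct (Hx (a - x)) as [u [Hu Hux]]; [lra|].
    apply Rabs_def2 in Hux. lra.
  - destruct (Hx (x - b)) as [u [Hu Hux]]; [lra|].
    apply Rabs_def2 in Hux. lra.
Qed.

Lemma adherent_unit_I (E : R -> Prop) x :
  (forall u, E u -> unit_I u) -> adherent E x -> unit_I x.
Proof.
  intros HE Hx. apply closed_segment. exact (adherent_mono _ _ x HE Hx).
Qed.

Section Levels.

Variable f : R -> R.
Hypothesis f_cont : forall x, unit_I x -> continuous_within_unit f x.

Lemma closed_sublevel c : closed (fun u => unit_I u /\ f u <= c).
Proof.
  intros x Hx.
  pose proof (adherent_unit_I _ x (fun u Hu => proj1 Hu) Hx) as Ux.
  split; [exact Ux|]. apply Rnot_lt_le; intro Hlt.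
  destruct (f_cont x Ux (f x - c)) as [d [Hd Hfd]]; [lra|].
  destruct (Hx d Hd) as [u [[Uu Hfu] Hux]].
  pose proof (Rabs_def2 _ _ (Hfd u Uu Hux)). lra.
Qed.

Lemma closed_superlevel c : closed (fun u => unit_I u /\ c <= f u).
Proof.
  intros x Hx.
  pose proof (adherent_unit_I _ x (fun u Hu => proj1 Hu) Hx) as Ux.
  split; [exact Ux|]. apply Rnot_lt_le; intro Hlt.
  destruct (f_cont x Ux (c - f x)) as [d [Hd Hfd]]; [lra|].
  destruct (Hx d Hd) as [u [[Uu Hfu] Hux]].
  pose proof (Rabs_def2 _ _ (Hfd u Uu Hux)). lra.
Qed.

Lemma closed_level c : closed (fun u => unit_I u /\ f u = c).
Proof.
  intros x Hx.
  destruct (closed_sublevel c x) as [Ux Hle].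
  { revert Hx. apply adherent_mono. intros u [Uu Hu]. split; [exact Uu | lra]. }
  destruct (closed_superlevel c x) as [_ Hge].
  { revert Hx. apply adherent_mono. intros u [Uu Hu]. split; [exact Uu | lra]. }
  split; [exact Ux | lra].
Qed.

End Levels.

Lemma closed_has_max (E : R -> Prop) :
  closed E -> (exists x, E x) -> (exists B, forall u, E u -> u <= B) ->
  exists M, E M /\ forall u, E u -> u <= M.
Proof.
  intros HE Hne Hb. destruct (completeness E Hb Hne) as [M [Hub Hleast]].
  exists M. split; [|exact Hub].
  apply HE. intros d Hd. apply NNPP. intro Hfar.
  assert (M <= M - d); [|lra].
  apply Hleast. intros u Hu. apply Rnot_lt_le. intro Hlt.
  apply Hfar. exists u. split; [exact Hu|].
  pose proof (Hub u Hu). apply Rabs_def1; lra.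
Qed.

Lemma closed_has_min (E : R -> Prop) :
  closed E -> (exists x, E x) -> (exists B, forall u, E u -> B <= u) ->
  exists L, E L /\ forall u, E u -> L <= u.
Proof.
  intros HE [x Hx] [B HB].
  destruct (closed_has_max (fun u => E (- u))) as [M [HM HMmax]].
  - intros y Hy. apply HE. apply adherent_opp in Hy. revert Hy.
    apply adherent_mono. intro u. rewrite Ropp_involutive. auto.
  - exists (- x). rewrite Ropp_involutive. exact Hx.
  - exists (- B). intros u Hu. pose proof (HB _ Hu). lra.
  - exists (- M). split; [exact HM|]. intros u Hu.
    assert (- u <= M) by (apply HMmax; rewrite Ropp_involutive; exact Hu). lra.
Qed.

Lemma closed_convex_segment (E : R -> Prop) lo hi :
  closed E -> (exists x, E x) -> (forall u, E u -> lo <= u <= hi) ->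
  (forall x y t, E x -> E y -> x <= t <= y -> E t) ->
  exists L U, L <= U /\ forall t, E t <-> L <= t <= U.
Proof.
  intros HE Hne Hb Hconv.
  destruct (closed_has_min E HE Hne) as [L [HL HLmin]].
  { exists lo. intros u Hu. exact (proj1 (Hb u Hu)). }
  destruct (closed_has_max E HE Hne) as [U [HU HUmax]].
  { exists hi. intros u Hu. exact (proj2 (Hb u Hu)). }
  exists L, U. split; [exact (HUmax L HL)|]. intro t. split.
  - intro Ht. split; [exact (HLmin t Ht) | exact (HUmax t Ht)].
  - intro Ht. exact (Hconv L U t HL HU Ht).
Qed.

Lemma unit_IVT f y :
  (forall x, unit_I x -> continuous_within_unit f x) -> f 0 <= y -> y <= f 1 ->
  exists s, unit_I s /\ f s = y.
Proof.
  intros Hf H0 H1.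
  destruct (closed_has_max (fun u => unit_I u /\ f u <= y)) as [s [[Us Hs] Hsmax]].
  - exact (closed_sublevel f Hf y).
  - exists 0. split; [unfold unit_I; lra | exact H0].
  - exists 1. intros u [Uu _]. exact (proj2 Uu).
  - exists s. split; [exact Us|]. apply Rle_antisym; [exact Hs|].
    destruct (Rle_lt_or_eq_dec s 1 (proj2 Us)) as [Hs1 | ->]; [|exact H1].
    apply (closed_superlevel f Hf y s), adherent_from_right; [exact Hs1|].
    intros u Hu. assert (Uu : unit_I u) by (unfold unit_I in *; lra).
    split; [exact Uu|]. apply Rnot_lt_le. intro Hlt.
    pose proof (Hsmax u (conj Uu (Rlt_le _ _ Hlt))). lra.
Qed.

Lemma subset_pair_cases (T : Type) (S : T -> Prop) (L U : T) :
  (exists t, S t) -> (forall t, S t -> t = L \/ t = U) ->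
  (forall t, S t <-> t = L) \/ (forall t, S t <-> t = U) \/
  (forall t, S t <-> t = L \/ t = U).
Proof.
  intros [t0 St0] HS.
  destruct (classic (S L)) as [SL | SL]; destruct (classic (S U)) as [SU | SU].
  - right; right. intro t. split; [apply HS | intros [-> | ->]; assumption].
  - left. intro t. split; [|intros ->; exact SL].
    intro St. destruct (HS t St) as [-> | ->]; [reflexivity | contradiction].
  - right; left. intro t. split; [|intros ->; exact SU].
    intro St. destruct (HS t St) as [-> | ->]; [contradiction | reflexivity].
  - exfalso. destruct (HS t0 St0) as [-> | ->]; contradiction.
Qed.

Section ContinuousArchimedeanTnorm.

Variable phi : R -> R -> R.
Hypothesis phi_tnorm : is_tnorm phi.
Hypothesis phi_cont : continuous_on_unit_square phi.
Hypothesis phi_arch : forall x, 0 < x < 1 -> phi x x < x.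

Lemma tnorm_unit x y : unit_I x -> unit_I y -> unit_I (phi x y).
Proof. apply phi_tnorm. Qed.

Lemma tnorm_assoc x y z : unit_I x -> unit_I y -> unit_I z ->
  phi x (phi y z) = phi (phi x y) z.
Proof. apply phi_tnorm. Qed.

Lemma tnorm_mono_r a y y' : unit_I a -> unit_I y -> unit_I y' -> y <= y' ->
  phi a y <= phi a y'.
Proof.
  destruct phi_tnorm as (_ & _ & _ & Hmono & _).
  intros Ua Uy Uy' Hyy'. apply Hmono; auto using Rle_refl.
Qed.

Lemma tnorm_1_r a : unit_I a -> phi a 1 = a.
Proof. apply phi_tnorm. Qed.

Lemma tnorm_le_l a y : unit_I a -> unit_I y -> phi a y <= a.
Proof.
  intros Ua Uy. rewrite <- (tnorm_1_r a Ua) at 2.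
  apply tnorm_mono_r; [exact Ua | exact Uy | unfold unit_I; lra | exact (proj2 Uy)].
Qed.

Lemma tnorm_0_r a : unit_I a -> phi a 0 = 0.
Proof.
  destruct phi_tnorm as (_ & Hcomm & _).
  intros Ua. assert (U0 : unit_I 0) by (unfold unit_I; lra).
  rewrite Hcomm by assumption.
  pose proof (tnorm_le_l 0 a U0 Ua). pose proof (proj1 (tnorm_unit 0 a U0 Ua)). lra.
Qed.

Lemma continuous_within_unit_tnorm a :
  unit_I a -> forall y, unit_I y -> continuous_within_unit (phi a) y.
Proof.
  intros Ua y Uy eps Heps. destruct (phi_cont a y Ua Uy eps Heps) as [d [Hd Hphi]].
  exists d. split; [exact Hd|]. intros y' Uy' Hy'.
  apply Hphi; [exact Ua | exact Uy' | | exact Hy'].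
  rewrite Rminus_diag, Rabs_R0. exact Hd.
Qed.

Lemma continuous_within_unit_tnorm_compl a :
  unit_I a -> forall y, unit_I y -> continuous_within_unit (fun t => phi a (1 - t)) y.
Proof.
  intros Ua y Uy eps Heps.
  assert (Uy1 : unit_I (1 - y)) by (unfold unit_I in *; lra).
  destruct (phi_cont a (1 - y) Ua Uy1 eps Heps) as [d [Hd Hphi]].
  exists d. split; [exact Hd|]. intros y' Uy' Hy'.
  apply Hphi; [exact Ua | unfold unit_I in *; lra | |].
  - rewrite Rminus_diag, Rabs_R0. exact Hd.
  - replace (1 - y' - (1 - y)) with (- (y' - y)) by ring. rewrite Rabs_Ropp. exact Hy'.
Qed.

Lemma tnorm_fixed_point_eq0 x s :
  unit_I x -> unit_I s -> s < 1 -> phi x s = x -> x = 0.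
Proof.
  intros Ux Us Hs1 Hxs.
  destruct (closed_has_min (fun u => unit_I u /\ phi x u = x)) as [e [[Ue Hxe] Hemin]].
  - exact (closed_level (phi x) (continuous_within_unit_tnorm x Ux) x).
  - exists s. split; [exact Us | exact Hxs].
  - exists 0. intros u [Uu _]. exact (proj1 Uu).
  - assert (Hee : e <= phi e e).
    { apply Hemin. split; [exact (tnorm_unit e e Ue Ue)|].
      rewrite tnorm_assoc, !Hxe by assumption. reflexivity. }
    pose proof (tnorm_le_l e e Ue Ue).
    pose proof (Hemin s (conj Us Hxs)).
    destruct (proj1 Ue) as [He0 | <-].
    + pose proof (phi_arch e ltac:(lra)). lra.
    + rewrite tnorm_0_r in Hxe by exact Ux. lra.
Qed.

Lemma tnorm_strict_mono_r a t t' :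
  unit_I a -> unit_I t -> unit_I t' -> t < t' -> 0 < phi a t -> phi a t < phi a t'.
Proof.
  intros Ua Ut Ut' Htt' Hpos. apply Rnot_le_lt. intro Hle.
  assert (Hx : phi a t' = phi a t).
  { pose proof (tnorm_mono_r a t t' Ua Ut Ut' (Rlt_le _ _ Htt')). lra. }
  destruct (unit_IVT (phi t') t) as [s [Us Hs]].
  - exact (continuous_within_unit_tnorm t' Ut').
  - rewrite tnorm_0_r by exact Ut'. exact (proj1 Ut).
  - rewrite tnorm_1_r by exact Ut'. lra.
  - assert (Hs1 : s < 1).
    { destruct (Rle_lt_or_eq_dec s 1 (proj2 Us)) as [Hs1 | ->]; [exact Hs1|].
      rewrite tnorm_1_r in Hs by exact Ut'. lra. }
    assert (Hfix : phi (phi a t) s = phi a t).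
    { rewrite <- Hx, <- tnorm_assoc, Hs, Hx by assumption. reflexivity. }
    pose proof (tnorm_fixed_point_eq0 _ s (tnorm_unit a t Ua Ut) Us Hs1 Hfix). lra.
Qed.

Variables (Ap Am : nat -> nat -> R) (b : nat -> R) (m j : nat).
Hypothesis entries_unit :
  forall i, (i < m)%nat -> unit_I (Ap i j) /\ unit_I (Am i j).

Lemma I_col_iff t :
  I_col phi Ap Am b m j t <->
  unit_I t /\ forall i, (i < m)%nat ->
    phi (Ap i j) t <= b i /\ phi (Am i j) (1 - t) <= b i.
Proof.
  unfold I_col, I_set, lhs. split.
  - intros [Ut H]. split; [exact Ut|]. intros i Hi. destruct (H i Hi) as [_ Hmax].
    pose proof (Rmax_l (phi (Ap i j) t) (phi (Am i j) (1 - t))).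
    pose proof (Rmax_r (phi (Ap i j) t) (phi (Am i j) (1 - t))). lra.
  - intros [Ut H]. split; [exact Ut|]. intros i Hi. split; [exact Ut|].
    destruct (H i Hi). apply Rmax_lub; assumption.
Qed.

Lemma I_col_convex x y t :
  I_col phi Ap Am b m j x -> I_col phi Ap Am b m j y -> x <= t <= y ->
  I_col phi Ap Am b m j t.
Proof.
  intros Hx Hy Ht.
  apply I_col_iff in Hx as [Ux Hx]. apply I_col_iff in Hy as [Uy Hy].
  assert (Ut : unit_I t) by (unfold unit_I in *; lra).
  apply I_col_iff. split; [exact Ut|]. intros i Hi.
  destruct (entries_unit i Hi) as [UAp UAm].
  destruct (Hx i Hi) as [_ HxAm]. destruct (Hy i Hi) as [HyAp _]. split.
  - eapply Rle_trans; [apply tnorm_mono_r | exact HyAp]; (assumption || apply Ht).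
  - eapply Rle_trans; [apply tnorm_mono_r | exact HxAm];
      (assumption || unfold unit_I in *; lra).
Qed.

Lemma I_col_closed : closed (I_col phi Ap Am b m j).
Proof.
  intros x Hx. apply I_col_iff. split.
  - exact (adherent_unit_I _ x (fun u Hu => proj1 Hu) Hx).
  - intros i Hi. destruct (entries_unit i Hi) as [UAp UAm]. split.
    + refine (proj2 (closed_sublevel _ (continuous_within_unit_tnorm _ UAp) _ x _)).
      revert Hx. apply adherent_mono. intros u Hu. apply I_col_iff in Hu as [Uu Hu].
      exact (conj Uu (proj1 (Hu i Hi))).
    + refine (proj2 (closed_sublevel _ (continuous_within_unit_tnorm_compl _ UAm) _ x _)).
      revert Hx. apply adherent_mono. intros u Hu. apply I_col_iff in Hu as [Uu Hu].
      exact (conj Uu (proj2 (Hu i Hi))).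
Qed.

Lemma I_col_segment :
  (exists t, I_col phi Ap Am b m j t) ->
  exists L U, L <= U /\ forall t, I_col phi Ap Am b m j t <-> L <= t <= U.
Proof.
  intro Hne. apply (closed_convex_segment _ 0 1 I_col_closed Hne).
  - intros u Hu. exact (proj1 Hu).
  - exact I_col_convex.
Qed.

Lemma S'_set_endpoints i L U :
  (i < m)%nat -> 0 < b i -> (forall t, I_col phi Ap Am b m j t <-> L <= t <= U) ->
  forall t, S'_set phi Ap Am b m i j t -> t = L \/ t = U.
Proof.
  intros Hi Hb HLU t [[Ut Heq] Hcol].
  destruct (entries_unit i Hi) as [UAp UAm].
  apply HLU in Hcol as Ht.
  assert (HL : I_col phi Ap Am b m j L) by (apply HLU; lra).
  assert (HU : I_col phi Ap Am b m j U) by (apply HLU; lra).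
  apply I_col_iff in HL as [UL HL]. apply I_col_iff in HU as [UU HU].
  destruct (HL i Hi) as [_ HLAm]. destruct (HU i Hi) as [HUAp _].
  unfold lhs in Heq.
  destruct (Rle_dec (phi (Ap i j) t) (phi (Am i j) (1 - t))) as [Hle | Hgt].
  - rewrite Rmax_right in Heq by exact Hle. left.
    apply Rle_antisym; [apply Rnot_lt_le; intro HLt | lra].
    assert (phi (Am i j) (1 - t) < phi (Am i j) (1 - L));
      [apply tnorm_strict_mono_r; unfold unit_I in *; lra | lra].
  - rewrite Rmax_left in Heq by lra. right.
    apply Rle_antisym; [lra | apply Rnot_lt_le; intro HtU].
    assert (phi (Ap i j) t < phi (Ap i j) U);
      [apply tnorm_strict_mono_r; unfold unit_I in *; lra | lra].
Qed.

Lemma S'_set_iff_I_col i :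
  (i < m)%nat -> b i <= 0 ->
  forall t, S'_set phi Ap Am b m i j t <-> I_col phi Ap Am b m j t.
Proof.
  intros Hi Hb t. split; [intros [_ Hcol]; exact Hcol|].
  intro Hcol. split; [|exact Hcol]. split; [exact (proj1 Hcol)|].
  apply I_col_iff in Hcol as [Ut Hcol]. destruct (Hcol i Hi) as [HAp HAm].
  destruct (entries_unit i Hi) as [UAp _].
  pose proof (proj1 (tnorm_unit _ _ UAp Ut)).
  unfold lhs. pose proof (Rmax_l (phi (Ap i j) t) (phi (Am i j) (1 - t))).
  pose proof (Rmax_lub _ _ _ HAp HAm). lra.
Qed.

End ContinuousArchimedeanTnorm.

Theorem corollary4 (phi : R -> R -> R) (m n : nat)
  (Ap Am : nat -> nat -> R) (b : nat -> R) (i j : nat) :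
  continuous_archimedean_tnorm phi ->
  (forall i' j', (i' < m)%nat -> (j' < n)%nat -> unit_I (Ap i' j') /\ unit_I (Am i' j')) ->
  (forall i', (i' < m)%nat -> unit_I (b i')) ->
  (i < m)%nat -> (j < n)%nat ->
  (exists t, S'_set phi Ap Am b m i j t) ->
  exists L U : R, L <= U /\
    (forall t, I_col phi Ap Am b m j t <-> L <= t <= U) /\
    ((forall t, S'_set phi Ap Am b m i j t <-> t = L) \/
     (forall t, S'_set phi Ap Am b m i j t <-> t = U) \/
     (forall t, S'_set phi Ap Am b m i j t <-> t = L \/ t = U) \/
     (forall t, S'_set phi Ap Am b m i j t <-> L <= t <= U)).
Proof.
  intros (Htn & Hcont & Harch) Hentries _ Hi Hj [t0 Ht0].
  assert (Hcol : forall i', (i' < m)%nat -> unit_I (Ap i' j) /\ unit_I (Am i' j))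
    by (intros i' Hi'; exact (Hentries i' j Hi' Hj)).
  destruct (I_col_segment phi Htn Hcont Ap Am b m j Hcol (ex_intro _ t0 (proj2 Ht0)))
    as (L & U & HLU & HI).
  exists L, U. split; [exact HLU|]. split; [exact HI|].
  destruct (Rle_lt_dec (b i) 0) as [Hb | Hb].
  - right; right; right. intro t. rewrite <- HI.
    exact (S'_set_iff_I_col phi Htn Ap Am b m j Hcol i Hi Hb t).
  - destruct (subset_pair_cases _ _ L U (ex_intro _ t0 Ht0)
      (S'_set_endpoints phi Htn Hcont Harch Ap Am b m j Hcol i L U Hi Hb HI))
      as [H | [H | H]]; auto.
Qed.
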